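(* Let $n \ge 2$ and $X_0, Y_0 \in \mathrm{S}^{n-1}$. Construct a pair of processes $\{(X_t, Y_t)\}_{t \ge 0}$ by applying, at every step $t \ge 0$ and conditionally on $(X_t, Y_t)$, the proportional coupling described in the context. Then for every $t \ge 0$, $$\mathbb{E}\Big[\sum_{i=1}^n \big(X_t[i]^2 - Y_t[i]^2\big)^2\Big] \le 2\Big(1 - \frac{1}{2n}\Big)^t.$$
   Context: $\mathrm{S}^{n-1} = \{X \in \mathbb{R}^n : \sum_{i=1}^n X[i]^2 = 1\}$. For $1 \le i < j \le n$, $\theta \in [0,2\pi)$ and $X \in \mathrm{S}^{n-1}$, let $\mathrm{F}(i,j,\theta,X) \in \mathrm{S}^{n-1}$ be the vector obtained from $X$ by replacing $(X[i], X[j])$ with $(\cos(\theta)X[i] - \sin(\theta)X[j],\ \sin(\theta)X[i] + \cos(\theta)X[j])$ and leaving all other coordinates unchanged. (Kac's walk is $X_{t+1} = \mathrm{F}(i_t,j_t,\theta_t,X_t)$ with $(i_t,j_t)$ uniform among pairs $i<j$ and $\theta_t$ uniform on $[0,2\pi)$, all independent.) Proportional coupling of one step from $(X_t, Y_t)$: choose $1 \le i < j \le n$ uniformly among all pairs and $\theta \in [0,2\pi)$ uniformly, independently, and set $X_{t+1} = \mathrm{F}(i,j,\theta,X_t)$. Then choose $\varphi \in [0,2\pi)$ uniformly at random among all angles satisfying $X_{t+1}[i] = \sqrt{X_t[i]^2 + X_t[j]^2}\cos(\varphi)$ and $X_{t+1}[j] = \sqrt{X_t[i]^2 + X_t[j]^2}\sin(\varphi)$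 (the solution is unique unless $X_t[i]=X_t[j]=0$, in which case every angle qualifies). Then choose $\theta' \in [0,2\pi)$ uniformly among the angles satisfying $\mathrm{F}(i,j,\theta',Y_t)[i] = \sqrt{Y_t[i]^2 + Y_t[j]^2}\cos(\varphi)$ and $\mathrm{F}(i,j,\theta',Y_t)[j] = \sqrt{Y_t[i]^2 + Y_t[j]^2}\sin(\varphi)$, and set $Y_{t+1} = \mathrm{F}(i,j,\theta',Y_t)$. Each marginal process is then a copy of Kac's walk. *)

From HB Require Import structures.
From mathcomp Require Import all_boot all_order all_algebra.
From mathcomp Require Import all_classical all_reals all_analysis.
Set Implicit Arguments. Unset Strict Implicit. Unset Printing Implicit Defensive.
Import Order.TTheory GRing.Theory Num.Theory.
Local Open Scope ring_scope.
Local Open Scope classical_set_scope.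

Section Kac.
Variables (R : realType) (n : nat).

Definition vecR := 'I_n -> R.

Definition on_sphere (X : vecR) : Prop := \sum_(k < n) X k ^+ 2 = 1.

Definition rotF (i j : 'I_n) (th : R) (X : vecR) : vecR :=
  fun k => if k == i then cos th * X i - sin th * X j
           else if k == j then sin th * X i + cos th * X j
           else X k.

(* This is F(i,j,theta',Y) for every theta' solving the defining equations of the
   proportional coupling (unique theta' when Y[i],Y[j] not both 0; if both are 0
   every theta' qualifies and F(i,j,theta',Y) = Y). *)
Definition coupledY (i j : 'I_n) (c s : R) (Y : vecR) : vecR :=
  let r := Num.sqrt (Y i ^+ 2 + Y j ^+ 2) in
  fun k => if k == i then r * c else if k == j then r * s else Y k.

Local Open Scope ereal_scope.

Definition avg_angle (h : R -> \bar R) : \bar R :=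
  ((2 * pi)^-1)%:E * \int[lebesgue_measure]_(th in `[0%R, (2 * pi)%R[) h th.

Definition step_val (g : vecR -> vecR -> \bar R) (i j : 'I_n) (th : R)
  (X Y : vecR) : \bar R :=
  let X' := rotF i j th X in
  let rX := Num.sqrt (X i ^+ 2 + X j ^+ 2) in
  if rX == 0%R then
    (* every phi qualifies: phi uniform on [0,2pi) *)
    avg_angle (fun phi => g X' (coupledY i j (cos phi) (sin phi) Y))
  else
    (* phi is the unique angle with X'[i] = rX cos phi, X'[j] = rX sin phi *)
    g X' (coupledY i j (X' i / rX) (X' j / rX) Y).

(* One-step Markov operator of the proportional coupling:
   (K g)(X,Y) = E[ g(X_{t+1}, Y_{t+1}) | (X_t,Y_t) = (X,Y) ]. *)
Definition coupling_op (g : vecR -> vecR -> \bar R) : vecR -> vecR -> \bar R :=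
  fun X Y =>
    ((('C(n, 2))%:R)^-1)%:E *
      \sum_(i < n) \sum_(j < n | (i < j)%N) avg_angle (fun th => step_val g i j th X Y).

Definition coupled_expect (t : nat) (g : vecR -> vecR -> \bar R) (X0 Y0 : vecR)
  : \bar R := iter t coupling_op g X0 Y0.

Definition sqdist (X Y : vecR) : \bar R :=
  (\sum_(k < n) (X k ^+ 2 - Y k ^+ 2) ^+ 2)%:E.

End Kac.

From HB Require Import structures.
From mathcomp Require Import all_boot all_order all_algebra.
From mathcomp Require Import all_classical all_reals all_analysis measurable_realfun.
From mathcomp Require Import ring lra.
Import Order.TTheory GRing.Theory Num.Theory numFieldNormedType.Exports.
Set Implicit Arguments. Unset Strict Implicit. Unset Printing Implicit Defensive.
Local Open Scope ring_scope.

(* Write a_k = X_k^2 - Y_k^2, so the observable is D = sum_k a_k^2, and sum_k a_k = 0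
   when both points lie on the sphere.  A step in the plane (i, j) only changes a_i and
   a_j, and the proportional coupling puts X and Y on a common direction (cos phi, sin phi)
   of that plane, so (a_i, a_j) becomes (a_i + a_j) (cos^2 phi, sin^2 phi).  As
   cos^4 + sin^4 = 3/4 + cos (4 phi) / 4 and phi is a rotation of a uniform angle, the new
   contribution averages to 3/4 (a_i + a_j)^2.  Averaging over the pairs and using
   sum_k a_k = 0 gives E[D'] = (1 - (n + 2) / (2 n (n - 1))) D <= (1 - 1/(2n)) D, and
   D <= 2 on the sphere. *)

Section AngleAverage.
Local Open Scope classical_set_scope.
Variable R : realType.

(* [cos4 x] and [sin4 x] are cos (4 x) and sin (4 x), expanded in cos x and sin x. *)
Definition cos4 (x : R) := cos x ^+ 4 - 6 * cos x ^+ 2 * sin x ^+ 2 + sin x ^+ 4.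
Definition sin4 (x : R) := 4 * cos x ^+ 3 * sin x - 4 * cos x * sin x ^+ 3.

Lemma integral_itv_co_derive (F f : R -> R) (a b : R) : a < b -> continuous f ->
  (forall x : R, is_derive x 1 F (f x)) ->
  (\int[lebesgue_measure]_(x in `[a, b[) (f x)%:E = (F b - F a)%:E)%E.
Proof.
move=> ab cf dF.
rewrite integral_itv_bndo_bndc; last first.
  by apply/measurable_EFinP; apply: measurable_funS (continuous_measurable_fun cf).
have dFx x : derivable F x 1 by have [] := dF x.
have cF : continuous F.
  by move=> x; apply/differentiable_continuous; rewrite -derivable1_diffP.
rewrite (@continuous_FTC2 _ _ F) ?EFinB//.
- exact/continuous_subspaceT.
- split.
  + by move=> x _; exact: dFx.
  + by apply: cvg_at_right_filter; exact: cF.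
  + by apply: cvg_at_left_filter; exact: cF.
- by move=> x _; rewrite derive1E derive_val.
Qed.

Lemma continuous_trig4 (a b c : R) : continuous (fun x => a + b * cos4 x + c * sin4 x).
Proof.
have cosX k : continuous (fun x : R => cos x ^+ k) :=
  fun x => continuous_comp (@continuous_cos R x) (@exprn_continuous R k _).
have sinX k : continuous (fun x : R => sin x ^+ k) :=
  fun x => continuous_comp (@continuous_sin R x) (@exprn_continuous R k _).
move=> x; rewrite /cos4 /sin4; apply: cvgD; first apply: cvgD.
- exact: cvg_cst.
- apply: cvgM; first exact: cvg_cst.
  apply: cvgD; first apply: cvgB; [exact: cosX | | exact: sinX].
  by apply: cvgM; first apply: cvgM; [exact: cvg_cst | exact: cosX | exact: sinX].
- apply: cvgM; first exact: cvg_cst.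
  apply: cvgB; apply: cvgM; first apply: cvgM.
  + exact: cvg_cst.
  + exact: cosX.
  + exact: continuous_sin.
  + apply: cvgM; [exact: cvg_cst | exact: continuous_cos].
  + exact: sinX.
Qed.

Lemma is_derive_trig4 (a b c x : R) :
  is_derive x 1 (fun y => a * y + b * (cos y ^+ 3 * sin y - cos y * sin y ^+ 3)
     - c * (cos y ^+ 4 + sin y ^+ 4)) (a + b * cos4 x + c * sin4 x).
Proof.
rewrite (_ : (fun y => _) = a \*: @id R
   + b \*: ((@cos R) ^+ 3 * (@sin R) - (@cos R) * (@sin R) ^+ 3)
   - c \*: ((@cos R) ^+ 4 + (@sin R) ^+ 4)); last first.
  by apply/funext => y; rewrite /= !exprfctE.
apply: is_derive_eq.
rewrite /cos4 /sin4 /= !scaler1 /GRing.scale /= !exprfctE.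
ring.
Qed.

Lemma avg_angle_trig4 (a b c : R) :
  avg_angle (fun x => (a + b * cos4 x + c * sin4 x)%:E) = a%:E.
Proof.
have pi2_gt0 : (0 : R) < 2 * pi by rewrite mulr_gt0 // pi_gt0.
rewrite /avg_angle (integral_itv_co_derive pi2_gt0 (@continuous_trig4 a b c)
  (@is_derive_trig4 a b c)) -EFinM; congr (_%:E).
rewrite mulr_natl cos2pi sin2pi cos0 sin0 -mulr_natl.
rewrite [X in _ * X](_ : _ = 2 * pi * a); last by ring.
by rewrite mulKf // gt_eqF.
Qed.

Lemma avg_angle_cst (a : R) : avg_angle (fun=> a%:E) = a%:E.
Proof.
rewrite -[RHS](avg_angle_trig4 a 0 0); congr avg_angle.
by apply/funext => x; rewrite !mul0r !addr0.
Qed.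

Lemma avg_angle_ge0 (f : R -> \bar R) :
  (forall x, 0 <= f x)%E -> (0 <= avg_angle f)%E.
Proof.
move=> f0; rewrite /avg_angle mule_ge0 //; last exact: integral_ge0.
by rewrite lee_fin invr_ge0 mulr_ge0 // pi_ge0.
Qed.

Lemma le_avg_angle (f g : R -> \bar R) : (forall x, 0 <= f x)%E ->
  (forall x, f x <= g x)%E -> (avg_angle f <= avg_angle g)%E.
Proof.
move=> f0 fg; rewrite /avg_angle lee_wpmul2l //.
  by rewrite lee_fin invr_ge0 mulr_ge0 // pi_ge0.
have g0 x : (0 <= g x)%E by apply: le_trans (fg x).
rewrite ge0_integralE; last by move=> x _.
rewrite ge0_integralE; last by move=> x _.
apply: le_ereal_sup => _ [u uf <-]; exists u => //= x.
by apply: le_trans (uf x) _; rewrite /patch; case: ifP.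
Qed.

Lemma rot_sqr_sum (x y t : R) :
  (cos t * x - sin t * y) ^+ 2 + (sin t * x + cos t * y) ^+ 2 = x ^+ 2 + y ^+ 2.
Proof. by rewrite -[RHS]mul1r -(cos2Dsin2 t); ring. Qed.

Lemma rot_quartic (x y t : R) :
  (cos t * x - sin t * y) ^+ 4 + (sin t * x + cos t * y) ^+ 4 =
  3 / 4 * (x ^+ 2 + y ^+ 2) ^+ 2
  - ((x * y) ^+ 2 - ((x ^+ 2 - y ^+ 2) / 2) ^+ 2) * cos4 t
  - (x ^+ 2 - y ^+ 2) * x * y * sin4 t.
Proof.
transitivity (3 / 4 * (x ^+ 2 + y ^+ 2) ^+ 2 * (cos t ^+ 2 + sin t ^+ 2) ^+ 2
  - ((x * y) ^+ 2 - ((x ^+ 2 - y ^+ 2) / 2) ^+ 2) * cos4 t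
  - (x ^+ 2 - y ^+ 2) * x * y * sin4 t); last by rewrite cos2Dsin2 expr1n mulr1.
by rewrite /cos4 /sin4; field.
Qed.

Lemma avg_angle_rot_quartic (K L x y r : R) : r ^+ 2 = x ^+ 2 + y ^+ 2 -> r != 0 ->
  avg_angle (fun t => (K + L * (((cos t * x - sin t * y) / r) ^+ 4
                               + ((sin t * x + cos t * y) / r) ^+ 4))%:E)
  = (K + 3 / 4 * L)%:E.
Proof.
move=> r2 r0.
rewrite -(avg_angle_trig4 _ (- L * ((x * y) ^+ 2 - ((x ^+ 2 - y ^+ 2) / 2) ^+ 2) / r ^+ 4)
                          (- L * (x ^+ 2 - y ^+ 2) * x * y / r ^+ 4)).
congr avg_angle; apply/funext => t; congr (_%:E).
by rewrite !expr_div_n -mulrDl rot_quartic -r2; field.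
Qed.

Lemma avg_angle_quartic (K L : R) :
  avg_angle (fun t => (K + L * (cos t ^+ 4 + sin t ^+ 4))%:E) = (K + 3 / 4 * L)%:E.
Proof.
have one2 : (1 : R) ^+ 2 = 1 ^+ 2 + 0 ^+ 2 by rewrite expr0n addr0.
rewrite -(avg_angle_rot_quartic K L one2 (oner_neq0 R)).
congr avg_angle; apply/funext => t.
by rewrite !mulr1 !mulr0 subr0 addr0 !divr1.
Qed.

End AngleAverage.

Lemma sum_upper_pairs_sym (R : comRingType) (n : nat) (w : 'I_n -> 'I_n -> R) :
  (forall i j, w i j = w j i) ->
  2 * \sum_(i < n) \sum_(j < n | (i < j)%N) w i j
  = \sum_(i < n) \sum_(j < n) w i j - \sum_(i < n) w i i.
Proof.
move=> w_sym.
have split_row i : \sum_(j < n) w i j = \sum_(j < n | (i < j)%N) w i j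
    + \sum_(j < n | (j < i)%N) w i j + w i i.
  rewrite (bigID (fun j : 'I_n => (i < j)%N)) /= -addrA; congr (_ + _).
  rewrite (bigD1 i) /= ?ltnn // addrC; congr (_ + _).
  by apply: eq_bigl => j; rewrite -leqNgt ltn_neqAle andbC.
have lower_upper : \sum_(i < n) \sum_(j < n | (j < i)%N) w i j
    = \sum_(i < n) \sum_(j < n | (i < j)%N) w i j.
  rewrite (exchange_big_dep xpredT) //=.
  by apply: eq_bigr => i _; apply: eq_bigr => j _; rewrite w_sym.
under [\sum_(i < n) \sum_(j < n) _]eq_bigr do rewrite split_row.
by rewrite !big_split /= lower_upper; ring.
Qed.

Lemma natr_bin2 (R : ringType) (n : nat) : 2 * ('C(n, 2))%:R = n%:R * (n%:R - 1) :> R.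
Proof.
case: n => [|m]; first by rewrite bin0n mulr0 mul0r.
have := mul_bin_diag m.+1 1; rewrite bin1 /= => e.
by rewrite -natrM -e natrM -natr1 addrK.
Qed.

Section ProportionalCoupling.
Variables (R : realType) (n : nat).
Implicit Types (X Y Z W : vecR R n).

Definition sqdistr X Y : R := \sum_(k < n) (X k ^+ 2 - Y k ^+ 2) ^+ 2.

Lemma sqdistr_ge0 X Y : 0 <= sqdistr X Y.
Proof. by apply: sumr_ge0 => k _; exact: sqr_ge0. Qed.

Lemma on_sphere_sqr_le1 X k : on_sphere X -> X k ^+ 2 <= 1.
Proof.
by move=> sX; rewrite -sX (bigD1 k) //= lerDl sumr_ge0 // => l _; exact: sqr_ge0.
Qed.

Lemma sqdistr_le2 X Y : on_sphere X -> on_sphere Y -> sqdistr X Y <= 2.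
Proof.
move=> sX sY; rewrite -[2]/(1 + 1) -{1}sX -sY -big_split /=.
apply: ler_sum => k _.
have := on_sphere_sqr_le1 k sX; have := on_sphere_sqr_le1 k sY.
have := sqr_ge0 (X k); have := sqr_ge0 (Y k); nra.
Qed.

Section Pair.
Variables (i j : 'I_n).
Hypothesis neq_ij : i != j.

Lemma big_pair_split (f : 'I_n -> R) :
  \sum_k f k = f i + f j + \sum_(k | (k != i) && (k != j)) f k.
Proof. by rewrite (bigD1 i) //= (bigD1 j) 1?eq_sym //= addrA. Qed.

Lemma on_sphere_pair_update X Z :
  (forall k, k != i -> k != j -> Z k = X k) ->
  Z i ^+ 2 + Z j ^+ 2 = X i ^+ 2 + X j ^+ 2 -> on_sphere X -> on_sphere Z.
Proof.
move=> Zk Zij; rewrite /on_sphere => <-.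
rewrite !(big_pair_split (fun k => _ ^+ 2)) Zij; congr (_ + _).
by apply: eq_bigr => k /andP[ki kj]; rewrite Zk.
Qed.

Lemma rotF_i t X : rotF i j t X i = cos t * X i - sin t * X j.
Proof. by rewrite /rotF eqxx. Qed.

Lemma rotF_j t X : rotF i j t X j = sin t * X i + cos t * X j.
Proof. by rewrite /rotF eqxx eq_sym (negbTE neq_ij). Qed.

Lemma rotF_other t X k : k != i -> k != j -> rotF i j t X k = X k.
Proof. by rewrite /rotF => /negbTE -> /negbTE ->. Qed.

Lemma coupledY_i c s Y : coupledY i j c s Y i = Num.sqrt (Y i ^+ 2 + Y j ^+ 2) * c.
Proof. by rewrite /coupledY eqxx. Qed.

Lemma coupledY_j c s Y : coupledY i j c s Y j = Num.sqrt (Y i ^+ 2 + Y j ^+ 2) * s.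
Proof. by rewrite /coupledY eqxx eq_sym (negbTE neq_ij). Qed.

Lemma coupledY_other c s Y k : k != i -> k != j -> coupledY i j c s Y k = Y k.
Proof. by rewrite /coupledY => /negbTE -> /negbTE ->. Qed.

Lemma on_sphere_rotF t X : on_sphere X -> on_sphere (rotF i j t X).
Proof.
apply: on_sphere_pair_update; first exact: rotF_other.
by rewrite rotF_i rotF_j rot_sqr_sum.
Qed.

Lemma on_sphere_coupledY c s Y : c ^+ 2 + s ^+ 2 = 1 -> on_sphere Y ->
  on_sphere (coupledY i j c s Y).
Proof.
move=> cs; apply: on_sphere_pair_update; first exact: coupledY_other.
rewrite coupledY_i coupledY_j !exprMn -mulrDr cs mulr1.
by rewrite sqr_sqrtr // addr_ge0 // sqr_ge0.
Qed.

Lemma sqdistr_coupled X Y Z r c s :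
  (forall k, k != i -> k != j -> Z k = X k) -> r ^+ 2 = X i ^+ 2 + X j ^+ 2 ->
  Z i = r * c -> Z j = r * s ->
  sqdistr Z (coupledY i j c s Y)
  = sqdistr X Y - (X i ^+ 2 - Y i ^+ 2) ^+ 2 - (X j ^+ 2 - Y j ^+ 2) ^+ 2
    + (X i ^+ 2 - Y i ^+ 2 + (X j ^+ 2 - Y j ^+ 2)) ^+ 2 * (c ^+ 4 + s ^+ 4).
Proof.
move=> Zk r2 Zi Zj.
rewrite /sqdistr !(big_pair_split (fun k => (_ ^+ 2 - _ ^+ 2) ^+ 2)).
under eq_bigr => k /andP[ki kj] do rewrite Zk // coupledY_other //.
rewrite coupledY_i coupledY_j Zi Zj !exprMn sqr_sqrtr ?addr_ge0 ?sqr_ge0 // r2.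
ring.
Qed.

(* The conditional mean of [sqdistr] after a coupled step in the plane (i, j). *)
Definition pair_mean X Y : R :=
  sqdistr X Y - (X i ^+ 2 - Y i ^+ 2) ^+ 2 - (X j ^+ 2 - Y j ^+ 2) ^+ 2
  + 3 / 4 * (X i ^+ 2 - Y i ^+ 2 + (X j ^+ 2 - Y j ^+ 2)) ^+ 2.

End Pair.

Lemma sum_pair_mean X Y : on_sphere X -> on_sphere Y ->
  2 * \sum_(i < n) \sum_(j < n | (i < j)%N) pair_mean i j X Y
  = (n%:R * (n%:R - 1) - (n%:R + 2) / 2) * sqdistr X Y.
Proof.
move=> sX sY; set a := fun k => X k ^+ 2 - Y k ^+ 2; set D := sqdistr X Y.
have sum_a : \sum_k a k = 0 by rewrite sumrB sX sY subrr.
have sum_a2 : \sum_k a k ^+ 2 / 4 = D / 4 by rewrite -mulr_suml.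
have row i : \sum_j pair_mean i j X Y = n%:R * D - n%:R / 4 * a i ^+ 2 - D / 4.
  rewrite (eq_bigr (fun j => D - a i ^+ 2 / 4 - a j ^+ 2 / 4 + 3 / 2 * a i * a j));
    last by move=> j _; rewrite /pair_mean /a -/D; field.
  rewrite big_split sumrB /= sum_a2 -mulr_sumr sum_a mulr0 addr0.
  by rewrite sumr_const card_ord -mulr_natl; field.
have diag i : pair_mean i i X Y = D + a i ^+ 2 by rewrite /pair_mean /a -/D; field.
rewrite sum_upper_pairs_sym; last by move=> i j; rewrite /pair_mean; field.
under eq_bigr do rewrite row.
under [X in _ - X]eq_bigr do rewrite diag.
rewrite !big_split /= !sumrN -!mulr_sumr -[\sum_k a k ^+ 2]/D !sumr_const card_ord.
by field.
Qed.

Lemma pair_mean_average_le X Y : (2 <= n)%N -> on_sphere X -> on_sphere Y ->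
  ('C(n, 2))%:R^-1 * \sum_(i < n) \sum_(j < n | (i < j)%N) pair_mean i j X Y
  <= (1 - (2 * n%:R)^-1) * sqdistr X Y.
Proof.
move=> n2 sX sY; have := sum_pair_mean sX sY; have := natr_bin2 R n.
set S := \sum_i _; set C := ('C(n, 2))%:R; set N := n%:R; set D := sqdistr X Y => eC eS.
have N2 : 2 <= N by rewrite /N (ler_nat R 2 n).
have N0 : N != 0 by rewrite gt_eqF // (lt_le_trans _ N2).
have N1 : N - 1 != 0 by rewrite subr_eq0 gt_eqF // (lt_le_trans _ N2) ?ltr1n.
have -> : C^-1 * S = (2 * C)^-1 * (2 * S) by rewrite invfM mulrACA mulVf ?mul1r.
rewrite eC eS -subr_ge0.
rewrite (_ : _ - _ = 3 * D / (2 * N * (N - 1))); last by field; apply/andP.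
have D0 : 0 <= D := sqdistr_ge0 X Y.
by rewrite divr_ge0 ?mulr_ge0 //; lra.
Qed.

Section Contraction.
Variables (h : vecR R n -> vecR R n -> \bar R) (k : R).
Hypotheses (k_ge0 : 0 <= k) (h_ge0 : forall X Y, (0 <= h X Y)%E)
  (h_le : forall X Y, on_sphere X -> on_sphere Y -> (h X Y <= (k * sqdistr X Y)%:E)%E).

Lemma avg_step_val_le (i j : 'I_n) (X Y : vecR R n) : i != j ->
  on_sphere X -> on_sphere Y ->
  (avg_angle (fun t => step_val h i j t X Y) <= (k * pair_mean i j X Y)%:E)%E.
Proof.
move=> neq_ij sX sY.
set K := k * (sqdistr X Y - (X i ^+ 2 - Y i ^+ 2) ^+ 2 - (X j ^+ 2 - Y j ^+ 2) ^+ 2).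
set L := k * (X i ^+ 2 - Y i ^+ 2 + (X j ^+ 2 - Y j ^+ 2)) ^+ 2.
have -> : k * pair_mean i j X Y = K + 3 / 4 * L by rewrite /pair_mean /K /L; ring.
set r := Num.sqrt (X i ^+ 2 + X j ^+ 2).
have r2 : r ^+ 2 = X i ^+ 2 + X j ^+ 2 by rewrite sqr_sqrtr // addr_ge0 // sqr_ge0.
have h_step t c s : c ^+ 2 + s ^+ 2 = 1 ->
    rotF i j t X i = r * c -> rotF i j t X j = r * s ->
    (h (rotF i j t X) (coupledY i j c s Y) <= (K + L * (c ^+ 4 + s ^+ 4))%:E)%E.
  move=> cs Zi Zj.
  apply: le_trans (h_le (on_sphere_rotF neq_ij t sX) (on_sphere_coupledY neq_ij cs sY)) _.
  rewrite (sqdistr_coupled neq_ij Y (rotF_other t X) r2 Zi Zj) lee_fin.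
  by rewrite /K /L mulrDr mulrA.
rewrite /step_val -/r; have [r0|r0] := eqVneq r 0.
- have /andP[/eqP Xi0 /eqP Xj0] : (X i == 0) && (X j == 0).
    by rewrite -(sqrf_eq0 (X i)) -(sqrf_eq0 (X j)) -paddr_eq0 ?sqr_ge0 // -r2 r0 expr0n.
  rewrite -[X in (_ <= X)%E]avg_angle_cst.
  apply: le_avg_angle => [t|t]; first by apply: avg_angle_ge0.
  rewrite -avg_angle_quartic; apply: le_avg_angle => // u.
  apply: h_step; first exact: cos2Dsin2.
    by rewrite rotF_i Xi0 Xj0 r0 !mulr0 mul0r subr0.
  by rewrite rotF_j // Xi0 Xj0 r0 !mulr0 mul0r addr0.
- rewrite -(avg_angle_rot_quartic K L r2 r0); apply: le_avg_angle => // t.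
  rewrite -(rotF_i i j t X) -(rotF_j neq_ij t X).
  apply: h_step; try by rewrite mulrC divfK.
  by rewrite !expr_div_n -mulrDl rotF_i rotF_j // rot_sqr_sum -r2 divff // expf_neq0.
Qed.

Lemma coupling_op_le X Y : (2 <= n)%N -> on_sphere X -> on_sphere Y ->
  (coupling_op h X Y <= (k * (1 - (2 * n%:R)^-1) * sqdistr X Y)%:E)%E.
Proof.
move=> n2 sX sY; rewrite /coupling_op.
apply: (@le_trans _ _ (('C(n, 2)%:R^-1)%:E *
   \sum_(i < n) \sum_(j < n | (i < j)%N) (k * pair_mean i j X Y)%:E))%E.
  apply: lee_wpmul2l; first by rewrite lee_fin invr_ge0.
  apply: lee_sum => i _; apply: lee_sum => j lt_ij.
  by apply: avg_step_val_le; rewrite // neq_ltn lt_ij.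
under eq_bigr do rewrite sumEFin.
rewrite sumEFin -EFinM lee_fin.
under eq_bigr do rewrite -mulr_sumr.
rewrite -mulr_sumr mulrCA -mulrA.
by rewrite ler_wpM2l // pair_mean_average_le.
Qed.

End Contraction.

Lemma coupling_op_ge0 (h : vecR R n -> vecR R n -> \bar R) X Y :
  (forall Z W, 0 <= h Z W)%E -> (0 <= coupling_op h X Y)%E.
Proof.
move=> h_ge0; rewrite /coupling_op mule_ge0 // sume_ge0 // => i _.
rewrite sume_ge0 // => j _; apply: avg_angle_ge0 => t.
by rewrite /step_val; case: ifP => _ //; apply: avg_angle_ge0.
Qed.

End ProportionalCoupling.

Theorem lemma3p3 (R : realType) (n : nat) (X0 Y0 : 'I_n -> R) :
  (2 <= n)%N -> on_sphere X0 -> on_sphere Y0 ->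
  forall t : nat,
    (coupled_expect t (@sqdist R n) X0 Y0 <= (2 * (1 - (2 * n%:R)^-1) ^+ t)%:E)%E.
Proof.
move=> n2 sX0 sY0 t; set c := 1 - _.
have c_ge0 : 0 <= c.
  have N2 : 2 <= n%:R :> R by rewrite (ler_nat R 2 n).
  by rewrite subr_ge0 invf_le1; lra.
have iter_bound m : (forall X Y, 0 <= iter m (@coupling_op R n) (@sqdist R n) X Y)%E /\
    (forall X Y, on_sphere X -> on_sphere Y ->
       iter m (@coupling_op R n) (@sqdist R n) X Y <= (c ^+ m * sqdistr X Y)%:E)%E.
  elim: m => [|m [iter_ge0 iter_le]] /=; split => X Y.
  - by rewrite /sqdist lee_fin; exact: sqdistr_ge0.
  - by rewrite expr0 mul1r.
  - exact: coupling_op_ge0.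
  - by rewrite exprSr; apply: coupling_op_le; rewrite ?exprn_ge0.
apply: le_trans ((iter_bound t).2 _ _ sX0 sY0) _.
by rewrite lee_fin [X in _ <= X]mulrC ler_wpM2l ?exprn_ge0 ?sqdistr_le2.
Qed.
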